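(* Let $G_s$ be a selection-augmented causal DAG with treatment $X$, outcome $Y$ and selection node $S$. If $P(Y^*_{X^*})$ is naturally experimental s-recoverable in $G_s$, then $G_s$ contains no direct path (edge $Y\to S$) and no indirect path (directed path from $Y$ to $S$ through intermediate nodes) between $Y$ and $S$.
   Context: Selection-augmented graph: $G_s$ is a causal DAG over observed variables $V$ (including $X$ and $Y$) with an additional binary selection node $S$ ($S=1$ means included in the sample), with edges into $S$ from the variables influencing inclusion; each endogenous node has its own exogenous variable. Twin network: add a counterfactual copy of every endogenous node (including $S^*$), each copy sharing the exogenous parent of its original and with the same edges among copies, and remove edges into the counterfactual treatment $X^*$; $Y^*_{X^*}$ is the counterfactual outcome, with $P(Y^*_{X^*=x}=y)=P(Y=y\mid do(X=x))$. Natural experimental s-recoverability: for every experimental distribution compatible with $G_s$, $P(Y^*_{X^*}\mid S=1)=P(Y^*_{X^*})>0$. *)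

From HB Require Import structures.
From mathcomp Require Import all_boot all_order all_algebra.
Set Implicit Arguments. Unset Strict Implicit. Unset Printing Implicit Defensive.
Import Order.TTheory GRing.Theory Num.Theory.
Local Open Scope ring_scope.

(* A directed graph on the node type N is an edge relation E (E v w: edge v -> w).
   Acyclic: no edge v -> w with a directed path back from w to v. *)
Definition acyclic (N : finType) (E : rel N) : Prop :=
  forall v w, E v w -> ~~ connect E w v.

(* Selection-augmented causal DAG G_s with treatment X, outcome Y and selection
   node S: a DAG in which X, Y, S are distinct and S is the (sink) selection node,
   i.e. it only receives edges (from the variables influencing inclusion). *)
Definition sel_graph (N : finType) (E : rel N) (X Y S : N) : Prop :=
  [/\ acyclic E, uniq [:: X; Y; S] & forall v, ~~ E S v].

(* A model: every endogenous node v has its own exogenous variable U_v with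
   values in U, distributed according to pU v (mutually independent), and a
   mechanism  f v : (values of endogenous nodes) -> U_v -> value of v.
   All endogenous values live in D; S is binary with values s0 (S=0), s1 (S=1). *)
Definition compatible (N : finType) (E : rel N) (S : N) (R : numDomainType)
    (U D : finType) (s0 s1 : D) (pU : N -> U -> R)
    (f : N -> (N -> D) -> U -> D) : Prop :=
  [/\ forall v u, 0 <= pU v u,
      forall v, \sum_(u : U) pU v u = 1,
      forall v (g h : N -> D) u, (forall w, E w v -> g w = h w) -> f v g u = f v h u
    & forall g u, f S g u \in [:: s0; s1]].

Definition weight (N U : finType) (R : numDomainType) (pU : N -> U -> R)
    (u : {ffun N -> U}) : R :=
  \prod_(v : N) pU v (u v).

Definition solves (N U D : finType) (f : N -> (N -> D) -> U -> D)
    (u : {ffun N -> U}) (val : {ffun N -> D}) : bool :=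
  [forall v, val v == f v (fun w => val w) (u v)].

(* counterfactual copy in the twin network: same exogenous u, edges into X*
   removed and X* set to x *)
Definition solves_do (N U D : finType) (f : N -> (N -> D) -> U -> D) (X : N) (x : D)
    (u : {ffun N -> U}) (valc : {ffun N -> D}) : bool :=
  (valc X == x) && [forall v, (v != X) ==> (valc v == f v (fun w => valc w) (u v))].

Definition Ptwin (N U D : finType) (R : numDomainType) (pU : N -> U -> R)
    (f : N -> (N -> D) -> U -> D) (X : N) (x : D)
    (A : {ffun N -> D} -> {ffun N -> D} -> bool) : R :=
  \sum_(u : {ffun N -> U}) weight pU u *
    (if [exists val : {ffun N -> D}, exists valc : {ffun N -> D},
           [&& solves f u val, solves_do f X x u valc & A val valc]]
     then 1 else 0).

Definition PS1 (N U D : finType) (R : numDomainType) (pU : N -> U -> R)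
    (f : N -> (N -> D) -> U -> D) (S : N) (s1 : D) : R :=
  \sum_(u : {ffun N -> U}) weight pU u *
    (if [exists val : {ffun N -> D}, solves f u val && (val S == s1)] then 1 else 0).

Definition PYcf (N U D : finType) (R : numDomainType) (pU : N -> U -> R)
    (f : N -> (N -> D) -> U -> D) (X Y : N) (x y : D) : R :=
  Ptwin pU f X x (fun _ valc => valc Y == y).

Definition PYcf_sel (N U D : finType) (R : numFieldType) (pU : N -> U -> R)
    (f : N -> (N -> D) -> U -> D) (X Y S : N) (x y s1 : D) : R :=
  Ptwin pU f X x (fun val valc => (valc Y == y) && (val S == s1)) / PS1 pU f S s1.

Definition nat_exp_s_recoverable (R : numFieldType) (N : finType) (E : rel N)
    (X Y S : N) : Prop :=
  forall (U D : finType) (s0 s1 : D) (pU : N -> U -> R) (f : N -> (N -> D) -> U -> D),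
    s0 != s1 ->
    compatible E S s0 s1 pU f ->
    0 < PS1 pU f S s1 ->
    (forall x y, 0 < PYcf pU f X Y x y) ->
    forall x y, PYcf_sel pU f X Y S x y s1 = PYcf pU f X Y x y.

(* Suppose Y reaches S.  Let every endogenous node be boolean, let Y copy a fair
   coin U_Y and let every other node be the disjunction of its parents.  In an
   acyclic graph a factual node is then true exactly when Y is true and is one
   of its ancestors, so S = Y; and Y*_{X*} = U_Y = Y because Y has no parents
   in the mechanism.  Hence P(S = 1) = 1/2 and P(Y*_{X*} = y) = 1/2, while
   P(Y*_{X*} = 1 | S = 1) = 1. *)
From HB Require Import structures.
From mathcomp Require Import all_boot all_order all_algebra.
From mathcomp Require Import lra.
Set Implicit Arguments. Unset Strict Implicit. Unset Printing Implicit Defensive.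
Import Order.TTheory GRing.Theory Num.Theory.
Local Open Scope ring_scope.

Section Reachability.
Variables (N : finType) (E : rel N).

Lemma connect_last_edge (e : rel N) a b : connect e a b -> a != b ->
  exists2 p, connect e a p & e p b.
Proof.
move=> /connectP [s] + ->; case/lastP: s => [|s p] /=; first by rewrite eqxx.
rewrite rcons_path last_rcons => /andP [ps ep] _.
by exists (last a s) => //; apply/connectP; exists s.
Qed.

Lemma connect_pred_closed (a : pred N) :
  (forall x y, E x y -> a x -> a y) -> forall x y, connect E x y -> a x -> a y.
Proof.
move=> cl x _ /connectP [p + ->].
by elim: p x => //= y p IHp x /andP [/cl Exy /IHp ay /Exy].
Qed.

Lemma acyclic_parent_closed (a : pred N) (Y : N) : acyclic E ->
  (forall v, v != Y -> a v -> exists2 w, E w v & a w) ->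
  forall v, a v -> a Y.
Proof.
move=> acy hpar.
suff H n v : (#|[set w | connect E w v]| < n)%N -> a v -> a Y by move=> v; apply: H.
elim: n v => [//|n IH] v; rewrite ltnS => hc av.
have [<-//|nvY] := eqVneq v Y.
have [w Ewv aw] := hpar v nvY av; apply: (IH w) aw; apply: leq_trans hc.
apply: proper_card; apply/properP; split.
  by apply/subsetP => z; rewrite !inE => czw; apply: connect_trans czw (connect1 Ewv).
by exists v; rewrite !inE ?connect0 //; apply: acy.
Qed.

Definition cut_into (B : pred N) := [rel x y | E x y && ~~ B y].

(* Solves v = b v on B and v = OR of the parents of v off B, even when E has
   cycles. *)
Definition reach (B : pred N) (b : N -> bool) : {ffun N -> bool} :=
  [ffun v => [exists w, [&& B w, b w & connect (cut_into B) w v]]].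

Lemma reach_in (B : pred N) (b : N -> bool) v : B v -> reach B b v = b v.
Proof.
move=> Bv; rewrite ffunE; apply/existsP/idP => [[w /and3P [Bw bw cwv]]|bv].
  have [<-//|nwv] := eqVneq w v.
  by have [p _ /andP [_]] := connect_last_edge cwv nwv; rewrite Bv.
by exists v; rewrite Bv bv connect0.
Qed.

Lemma reach_out (B : pred N) (b : N -> bool) v :
  ~~ B v -> reach B b v = [exists w, E w v && reach B b w].
Proof.
move=> nBv; apply/idP/existsP => [|[p /andP [Epv]]]; rewrite !ffunE.
  case/existsP => w /and3P [Bw bw cwv].
  have nwv : w != v by apply: contraNneq nBv => <-.
  have [p cwp /andP [Epv _]] := connect_last_edge cwv nwv.
  by exists p; rewrite Epv ffunE; apply/existsP; exists w; rewrite Bw bw.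
case/existsP => w /and3P [Bw bw cwp]; apply/existsP; exists w; rewrite Bw bw.
by apply: connect_trans cwp (connect1 _); rewrite /= Epv.
Qed.

End Reachability.

Lemma sum_weight_marginal (R : numDomainType) (N U : finType) (pU : N -> U -> R)
    (Y : N) (F : U -> R) :
  (forall v, \sum_t pU v t = 1) ->
  \sum_(u : {ffun N -> U}) weight pU u * F (u Y) = \sum_t pU Y t * F t.
Proof.
move=> pU1; pose G v t := pU v t * (if v == Y then F t else 1).
transitivity (\prod_v \sum_t G v t).
  rewrite bigA_distr_bigA; apply: eq_bigr => u _.
  rewrite /weight /G big_split /=; congr (_ * _).
  by rewrite (bigD1 Y) //= eqxx big1 ?mulr1 // => v /negbTE ->.
rewrite (bigD1 Y) //= [X in _ * X]big1 ?mulr1.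
  by apply: eq_bigr => t _; rewrite /G eqxx.
move=> v /negbTE nvY; rewrite -(pU1 v).
by apply: eq_bigr => t _; rewrite /G nvY mulr1.
Qed.

Section DisjunctiveModel.
Variables (N : finType) (E : rel N) (X Y S : N).
Hypotheses (acyE : acyclic E) (nXY : X != Y) (cYS : connect E Y S).

Definition or_mech (v : N) (g : N -> bool) (u : bool) : bool :=
  if v == Y then u else [exists w, E w v && g w].

Lemma or_mech_compatible (R : numDomainType) (pU : N -> bool -> R) :
  (forall v t, 0 <= pU v t) -> (forall v, \sum_t pU v t = 1) ->
  compatible E S false true pU or_mech.
Proof.
move=> pU0 pU1; split=> // [v g h u hgh|g u]; last by case: or_mech.
rewrite /or_mech; case: (v == Y) => //.
by apply: eq_existsb => w; case Ewv: (E w v); rewrite //= hgh.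
Qed.

Lemma solves_or_mech_reach u : solves or_mech u (reach E (pred1 Y) (fun=> u Y)).
Proof.
apply/forallP => v; apply/eqP; rewrite /or_mech; case: eqP => [->|/eqP nvY].
  by rewrite reach_in /= ?eqxx.
by rewrite reach_out.
Qed.

Lemma solves_do_or_mech_reach x u :
  solves_do or_mech X x u
    (reach E (predU (pred1 Y) (pred1 X)) (fun w => if w == X then x else u Y)).
Proof.
apply/andP; split; first by rewrite reach_in /= ?eqxx ?orbT.
apply/forallP => v; apply/implyP => nvX; apply/eqP; rewrite /or_mech.
case: eqP => [->|/eqP nvY]; first by rewrite reach_in /= ?eqxx // eq_sym (negbTE nXY).
by rewrite reach_out //= negb_or nvY.
Qed.

Lemma solves_or_mech_S u val : solves or_mech u val -> val S = u Y.
Proof.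
move=> /forallP hsol; have hv v : val v = or_mech v val (u v) by apply/eqP.
have valY : val Y = u Y by rewrite hv /or_mech eqxx.
rewrite -valY; apply/idP/idP => [|vY].
  apply: acyclic_parent_closed acyE _ S => v nvY.
  by rewrite hv /or_mech (negbTE nvY) => /existsP [w /andP [Ewv vw]]; exists w.
apply: connect_pred_closed cYS (vY) => v w Evw vv.
rewrite hv /or_mech; case: eqP => [->|_]; first by rewrite -valY.
by apply/existsP; exists v; rewrite Evw.
Qed.

Lemma solves_do_or_mech_Y x u valc : solves_do or_mech X x u valc -> valc Y = u Y.
Proof.
by case/andP => _ /forallP /(_ Y); rewrite eq_sym nXY /= /or_mech eqxx => /eqP.
Qed.

Lemma or_mech_factual_event u s :
  [exists val, solves or_mech u val && (val S == s)] = (u Y == s).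
Proof.
apply/existsP/idP => [[val /andP [hsol vS]]|uYs].
  by rewrite -(solves_or_mech_S hsol).
by exists (reach E (pred1 Y) (fun=> u Y)); rewrite solves_or_mech_reach
  (solves_or_mech_S (solves_or_mech_reach u)).
Qed.

Lemma or_mech_twin_event (P : bool -> bool -> bool) x u :
  [exists val, exists valc,
    [&& solves or_mech u val, solves_do or_mech X x u valc & P (val S) (valc Y)]]
  = P (u Y) (u Y).
Proof.
apply/existsP/idP => [[val /existsP [valc /and3P [hsol hdo]]]|Pu].
  by rewrite (solves_or_mech_S hsol) (solves_do_or_mech_Y hdo).
exists (reach E (pred1 Y) (fun=> u Y)); apply/existsP.
exists (reach E (predU (pred1 Y) (pred1 X)) (fun w => if w == X then x else u Y)).
rewrite solves_or_mech_reach solves_do_or_mech_reach.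
by rewrite (solves_or_mech_S (solves_or_mech_reach u))
  (solves_do_or_mech_Y (solves_do_or_mech_reach x u)).
Qed.

Variables (R : numDomainType) (pU : N -> bool -> R).
Hypothesis pU1 : forall v, \sum_t pU v t = 1.

Lemma PS1_or_mech s : PS1 pU or_mech S s = pU Y s.
Proof.
rewrite /PS1 (eq_bigr (fun u => weight pU u * (if u Y == s then 1 else 0))).
  rewrite (sum_weight_marginal Y (fun t => if t == s then 1 else 0)) // big_bool.
  by case: s; rewrite /= mulr1 mulr0 ?addr0 ?add0r.
by move=> u _; rewrite or_mech_factual_event.
Qed.

Lemma Ptwin_or_mech (P : bool -> bool -> bool) x :
  Ptwin pU or_mech X x (fun val valc => P (val S) (valc Y))
  = \sum_t pU Y t * (if P t t then 1 else 0).
Proof.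
rewrite /Ptwin -(sum_weight_marginal Y (fun t => if P t t then 1 else 0)) //.
by apply: eq_bigr => u _; rewrite or_mech_twin_event.
Qed.

End DisjunctiveModel.

Theorem lemma3 (R : realFieldType) (N : finType) (E : rel N) (X Y S : N) :
  sel_graph E X Y S ->
  nat_exp_s_recoverable R E X Y S ->
  (* no direct path Y -> S and no (indirect) directed path from Y to S *)
  ~~ E Y S /\ ~~ connect E Y S.
Proof.
move=> [acyE uXYS _] hrec.
have nXY : X != Y by move: uXYS; rewrite /= !inE negb_or => /andP [/andP []].
suff cYS : ~~ connect E Y S by split=> //; apply: contra cYS; apply: connect1.
apply/negP => cYS; pose pU (_ : N) (_ : bool) : R := 1 / 2.
have pU1 v : \sum_t pU v t = 1 by rewrite big_bool /pU /=; lra.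
have PS1_half : PS1 pU (or_mech E Y) S true = 1 / 2 by rewrite PS1_or_mech.
have PYcf_half x y : PYcf pU (or_mech E Y) X Y x y = 1 / 2.
  rewrite /PYcf (Ptwin_or_mech acyE nXY cYS pU1 (fun _ c => c == y)) big_bool /pU.
  by case: y; rewrite /= mulr1 mulr0 ?addr0 ?add0r.
have Psel_half : Ptwin pU (or_mech E Y) X true
    (fun val valc => (valc Y == true) && (val S == true)) = 1 / 2.
  rewrite (Ptwin_or_mech acyE nXY cYS pU1 (fun s c => (c == true) && (s == true))).
  by rewrite big_bool /pU /= mulr1 mulr0 addr0.
have compat : compatible E S false true pU (or_mech E Y).
  by apply: or_mech_compatible => // v t; rewrite /pU; lra.
have PS1_pos : 0 < PS1 pU (or_mech E Y) S true by rewrite PS1_half; lra.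
have PYcf_pos x y : 0 < PYcf pU (or_mech E Y) X Y x y by rewrite PYcf_half; lra.
have := hrec bool bool false true pU (or_mech E Y) isT compat PS1_pos PYcf_pos true true.
by rewrite /PYcf_sel Psel_half PS1_half PYcf_half divff //; lra.
Qed.
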